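(* Let $\mathcal G$ be a Lie superalgebra over a field of characteristic zero, let $\mathcal S$ be the space of symmetric operators on $\mathcal G$ and $[\cdot,\cdot]$ the extended bracket described below, and let $1$ denote the identity map of $\mathcal G$. If $A\in\mathcal S$, then for every integer $k\ge1$ the element $[A,k]=[\cdots[[A,1],1],\ldots,1]$ (with $1$ appearing $k$ times) also lies in $\mathcal S$.
   Context: Set $\mathcal U_1=\mathcal G$ with its $\mathbb Z_2$-grading. For $p\ge1$ define recursively $\mathcal U_{-p+1}=\mathrm{Hom}(\mathcal U_1,\mathcal U_{-p+2})$, $\mathbb Z_2$-graded by declaring $A$ even (resp. odd) if it preserves (resp. reverses) parity; $|u|$ is the parity of a homogeneous element. Elements of $\mathcal U_{1-p}$ are operators of order $p$ (elements of $\mathcal G$ have order $0$), identified for $p\ge1$ with $p$-linear maps $A(x_1,\dots,x_p)=A(x_1)\cdots(x_p)$; $\mathcal U_{1-}=\bigoplus_{p\ge0}\mathcal U_{1-p}$. The identity map $1$ is an even operator of order $1$. An operator of order $p\ge2$ is symmetric if $A(\dots,x_i,x_{i+1},\dots)=(-1)^{|x_i||x_{i+1}|}A(\dots,x_{i+1},x_i,\dots)$ for all homogeneous arguments and all $i$; operators of order $0$ or $1$ are symmetric; $\mathcal S$ is the span of symmetric operators. Define $\circ$: $A\circ y=A(y)$, $y\circ A=0$ for $A$ of order $\ge1$, $y\in\mathcal U_1$; for $A,B$ of orders $\ge1$, recursively $(A\circ B)(x)=A\circ B(x)+(-1)^{|B||x|}A(x)\circ B$. Define $\bullet$: $A_p\bullet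 B_q=\frac{p!q!}{(p+q-1)!}A_p\circ B_q$ for orders $p,q\ge1$; $A_p\bullet x=pA_p(x)$, $x\bullet A_p=0$, $x\bullet y=0$ for $x,y\in\mathcal U_1$. The bracket of $\mathcal G$ extends to $\mathcal U_{1-}$: on $\mathcal G$ it is the given bracket, and for operators $A,B$ of orders $p,q$ with $p+q\ge1$, $[A,B]$ is the operator of order $p+q$ defined recursively by $[A,B]\bullet x=[A,B\bullet x]+(-1)^{|x||B|}[A\bullet x,B]$ for all $x\in\mathcal G$. *)

From HB Require Import structures.
From mathcomp Require Import all_boot all_order all_algebra.
Set Implicit Arguments. Unset Strict Implicit. Unset Printing Implicit Defensive.
Import Order.TTheory GRing.Theory Num.Theory.
Local Open Scope ring_scope.

Section LieSuper.
Variables (K : fieldType) (G0 G1 : lmodType K).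

(* The Z2-graded vector space G = G0 (+) G1 (even part, odd part). *)
Notation G := (G0 * G1)%type.

Definition pr (a : bool) (x : G) : G := if a then (0, x.2) else (x.1, 0).

Definition homog (a : bool) (x : G) : Prop := pr a x = x.

Definition lie_superalgebra (br : G -> G -> G) : Prop :=
  [/\ (forall (c : K) x x' y, br (c *: x + x') y = c *: br x y + br x' y),
      (forall (c : K) x y y', br x (c *: y + y') = c *: br x y + br x y'),
      (forall a b x y, homog a x -> homog b y -> homog (a (+) b) (br x y)),
      (forall a b x y, homog a x -> homog b y ->
          br x y = - ((-1) ^+ (a && b) *: br y x)) &
      (forall a b c x y z, homog a x -> homog b y -> homog c z ->
          br x (br y z) = br (br x y) z + (-1) ^+ (a && b) *: br y (br x z))].

(* Operators: an operator of order p is represented by a function on lists of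
   arguments; only its values on lists of length p are meaningful.
   A(x1,...,xp) = A(x1)...(xp); an element y of G is the order-0 operator
   (fun _ => y). *)
Definition op := seq G -> G.

Definition opapp (A : op) (x : G) : op := fun s => A (x :: s).

Definition multilinear (p : nat) (A : op) : Prop :=
  forall (l r : seq G), (size l + size r).+1 = p ->
  forall (c : K) x y,
    A (l ++ (c *: x + y) :: r) = c *: A (l ++ x :: r) + A (l ++ y :: r).

Definition symmetric (p : nat) (A : op) : Prop :=
  multilinear p A /\
  forall (l r : seq G) (x y : G) (a b : bool),
    (size l + size r).+2 = p ->
    (forall z, z \in l ++ r -> exists e, homog e z) ->
    homog a x -> homog b y ->
    A (l ++ x :: y :: r) = (-1) ^+ (a && b) *: A (l ++ y :: x :: r).

(* Parity component of parity b of an operator, following the recursive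
   grading of U_{1-p} = Hom(U_1, U_{2-p}):
   A_b(x) = sum_a (A(pr a x))_{a+b}. *)
Fixpoint opPart (s : seq G) (b : bool) (A : op) {struct s} : G :=
  match s with
  | [::] => pr b (A [::])
  | x :: s' => \sum_(a : bool) opPart s' (a (+) b) (opapp A (pr a x))
  end.

Definition dot (p : nat) (A : op) (x : G) : op := fun s => p%:R *: A (x :: s).

(* Extended bracket, with fuel n = p + q:
   [A,B] . x = [A, B . x] + (-1)^{|x||B|} [A . x, B], with [A,B] . x =
   (p+q) [A,B](x), x and B decomposed into homogeneous components,
   and y . z = 0, y . A = 0 for y in G (so the terms vanish for q = 0,
   resp. p = 0). *)
Fixpoint xbr (br : G -> G -> G) (n p q : nat) (A B : op) {struct n} : op :=
  match n with
  | 0 => fun _ => br (A [::]) (B [::])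
  | n'.+1 => fun s =>
    match s with
    | [::] => 0
    | x :: s' =>
      (n%:R)^-1 *: \sum_(a : bool)
        ((if q is q'.+1 then xbr br n' p q' A (dot q B (pr a x)) s' else 0)
         + \sum_(b : bool)
             (if p is p'.+1 then
                (-1) ^+ (a && b) *:
                  xbr br n' p' q (dot p A (pr a x)) (fun t => opPart t b B) s'
              else 0))
    end
  end.

Definition bracket (br : G -> G -> G) (p q : nat) (A B : op) : op :=
  xbr br (p + q) p q A B.

Definition idop : op := fun s => if s is x :: _ then x else 0.

(* Elements of U_{1-} = (+)_p U_{1-p} are families F with F p of order p.
   [F, 1] by bilinearity: its order-(m+1) component is [F m, 1]. *)
Definition bracket1 (br : G -> G -> G) (F : nat -> op) : nat -> op :=
  fun m => if m is m'.+1 then bracket br m' 1 (F m') idop else (fun _ => 0).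

Definition bracketk (br : G -> G -> G) (k : nat) (F : nat -> op) : nat -> op :=
  iter k (bracket1 br) F.

(* F lies in S, the span of symmetric operators: F is a finite sum of
   symmetric operators B i of orders ord i. *)
Definition inS (F : nat -> op) : Prop :=
  exists (N : nat) (ord : 'I_N -> nat) (B : 'I_N -> op),
    (forall i, symmetric (ord i) (B i)) /\
    forall (p : nat) (l : seq G), size l = p ->
      F p l = \sum_(i < N | ord i == p) B i l.

End LieSuper.

From Pilot Require Import Defs.
From mathcomp Require Import all_boot all_order all_algebra ring.
From Stdlib Require Import FunctionalExtensionality.
Import GRing.Theory.
Local Open Scope ring_scope.
Set Implicit Arguments. Unset Strict Implicit.

(* For an operator A of order p, unwinding the recursive definition of the
   extended bracket at a first argument x gives
     [A,1](x, s) = 1/(p+1) ([A,x](s) + p [A(x),1](s)),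
   and for homogeneous arguments [A,x](s) = (-1)^(|x||s|) [A(s), x].  Hence
   [A,1] is multilinear, and it is symmetric whenever A is, by induction on p:
   a transposition inside s is handled by the induction hypothesis for A(x),
   while swapping the first two arguments x, y only exchanges the two terms
   [A(y,s), x] and [A(x,s), y] (with matching signs) and turns [A(x,y),1] into
   [A(y,x),1], which is the same up to sign by symmetry of A.  The bracket
   with 1 is linear in A, so it preserves the span S, and induction on k
   concludes. *)

Lemma sum_bool (V : nmodType) (F : bool -> V) : \sum_(a : bool) F a = F false + F true.
Proof. by rewrite big_bool addrC. Qed.

Section Grading.
Variables (K : fieldType) (G0 G1 : lmodType K).
Local Notation G := (G0 * G1)%type.

Lemma pr_linear a c (u v : G) : pr a (c *: u + v) = c *: pr a u + pr a v.
Proof.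
by case: a; case: u => u1 u2; case: v => v1 v2; rewrite /pr /=;
  congr pair; rewrite /= ?scaler0 ?addr0.
Qed.

Lemma pr_sum (x : G) : pr false x + pr true x = x.
Proof. by case: x => x1 x2; rewrite /pr /=; congr pair; rewrite /= ?addr0 ?add0r. Qed.

Lemma homog_pr a (x : G) : homog a (pr a x).
Proof. by case: a. Qed.

Lemma pr_homog e a (x : G) : homog e x -> pr a x = if a == e then x else 0.
Proof. by rewrite /homog => <-; case: a; case: e. Qed.

Fixpoint homogs (es : seq bool) (s : seq G) : Prop :=
  match es, s with
  | [::], [::] => True
  | e :: es', x :: s' => homog e x /\ homogs es' s'
  | _, _ => False
  end.

Definition parity (es : seq bool) : bool := foldr addb false es.

Lemma homogs_exists s :
  (forall x, x \in s -> exists e, homog e x) -> exists es, homogs es s.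
Proof.
elim: s => [|x s IH] hom_s; first by exists [::].
have [e hom_x] := hom_s x (mem_head x s).
have [|es hom_es] := IH; first by move=> z z_s; apply: hom_s; rewrite in_cons z_s orbT.
by exists (e :: es).
Qed.

Lemma homogs_mem es s : homogs es s -> forall x, x \in s -> exists e, homog e x.
Proof.
elim: s es => [|y s IH] [|e es] //= [hom_y hom_s] x.
by rewrite in_cons => /predU1P [->|]; [exists e | exact: IH hom_s x].
Qed.

Lemma homogs_cat es1 s1 es2 s2 :
  homogs es1 s1 -> homogs es2 s2 -> homogs (es1 ++ es2) (s1 ++ s2).
Proof. by elim: s1 es1 => [|x s1 IH] [|e es1] //= [? ?] ?; split; last exact: IH. Qed.

Lemma parity_swap es1 a b es2 :
  parity (es1 ++ a :: b :: es2) = parity (es1 ++ b :: a :: es2).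
Proof. by elim: es1 => [|e es1 IH] /=; [rewrite addbCA | rewrite IH]. Qed.

End Grading.

Section Operators.
Variables (K : fieldType) (G0 G1 : lmodType K).
Local Notation G := (G0 * G1)%type.
Local Notation op := (op G0 G1).

Definition op_eq (p : nat) (A B : op) := forall s, size s = p -> A s = B s.

Lemma multilinear_opapp p (A : op) x :
  multilinear p.+1 A -> multilinear p (opapp A x).
Proof.
by move=> linA l r size_lr c y z; rewrite /opapp -!cat_cons linA // -size_lr.
Qed.

Lemma multilinearZ p c (A : op) :
  multilinear p A -> multilinear p (fun s => c *: A s).
Proof. by move=> linA l r size_lr d x y; rewrite linA // scalerDr !scalerA mulrC. Qed.

Lemma multilinear0 p (A : op) l r :
  multilinear p A -> (size l + size r).+1 = p -> A (l ++ 0 :: r) = 0.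
Proof.
move=> linA size_lr; apply: (addrI (A (l ++ 0 :: r))).
by rewrite addr0 -{1}(scale1r (A _)) -linA // scale1r addr0.
Qed.

Lemma opapp_linear p (A : op) c x y : multilinear p.+1 A ->
  op_eq p (opapp A (c *: x + y)) (fun s => c *: opapp A x s + opapp A y s).
Proof. by move=> linA s size_s; apply: (linA [::]); rewrite /= size_s. Qed.

Lemma multilinear_pr_split p (A : op) x s : multilinear p.+1 A -> size s = p ->
  A (x :: s) = A (pr false x :: s) + A (pr true x :: s).
Proof.
move=> linA size_s; have := opapp_linear 1 (pr false x) (pr true x) linA size_s.
by rewrite /opapp !scale1r pr_sum.
Qed.

Lemma multilinear_homogs_eq p (A B : op) : multilinear p A -> multilinear p B ->
  (forall s es, size s = p -> homogs es s -> A s = B s) -> op_eq p A B.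
Proof.
elim: p A B => [|p IH] A B linA linB eqAB; first by case=> // _; apply: (eqAB _ [::]).
case=> [|x s] // [size_s].
rewrite (multilinear_pr_split x linA size_s) (multilinear_pr_split x linB size_s).
have eq_pr a : A (pr a x :: s) = B (pr a x :: s).
  apply: (IH (opapp A (pr a x)) (opapp B (pr a x))) size_s;
    try exact: multilinear_opapp.
  move=> t es size_t hom_t; apply: (eqAB _ (a :: es)); first by rewrite /= size_t.
  by split; first exact: homog_pr.
by rewrite !eq_pr.
Qed.

Lemma symmetric_opapp p (A : op) x e :
  Defs.symmetric p.+1 A -> homog e x -> Defs.symmetric p (opapp A x).
Proof.
move=> [linA symA] hom_x; split; first exact: multilinear_opapp.
move=> l r y z a b size_lr hom_lr hom_y hom_z; rewrite /opapp -!cat_cons.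
apply: symA => //; first by rewrite -size_lr.
by move=> w; rewrite in_cons => /predU1P [->|]; [exists e | exact: hom_lr].
Qed.

End Operators.

Section Bracket.
Variables (K : fieldType) (G0 G1 : lmodType K).
Local Notation G := (G0 * G1)%type.
Local Notation op := (op G0 G1).
Local Notation idop := (@idop K G0 G1).

Variable br : G -> G -> G.
Hypothesis br_linearl : forall c x x' y, br (c *: x + x') y = c *: br x y + br x' y.
Hypothesis br_linearr : forall c x y y', br x (c *: y + y') = c *: br x y + br x y'.

Definition op_linear (f : op -> G) :=
  forall c A B, f (fun s => c *: A s + B s) = c *: f A + f B.

Section OpLinear.
Variable f : op -> G.
Hypothesis linf : op_linear f.

Lemma op_linear0 : f (fun _ => 0) = 0.
Proof.
apply: (addrI (f (fun _ => 0))); rewrite addr0 -{1}(scale1r (f _)) -linf.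
by congr f; apply: functional_extensionality => s; rewrite scaler0 addr0.
Qed.

Lemma op_linearZ c A : f (fun s => c *: A s) = c *: f A.
Proof.
rewrite -[RHS]addr0 -op_linear0 -linf.
by congr f; apply: functional_extensionality => s; rewrite addr0.
Qed.

Lemma op_linearD A B : f (fun s => A s + B s) = f A + f B.
Proof.
rewrite -[f A]scale1r -linf.
by congr f; apply: functional_extensionality => s; rewrite scale1r.
Qed.

Lemma op_linear_sum (I : Type) (r : seq I) (P : pred I) (F : I -> op) :
  f (fun s => \sum_(i <- r | P i) F i s) = \sum_(i <- r | P i) f (F i).
Proof.
elim: r => [|i r IH].
  rewrite big_nil -[in RHS]op_linear0; congr f.
  by apply: functional_extensionality => s; rewrite big_nil.
rewrite big_cons -IH; case Pi: (P i); last first.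
  by congr f; apply: functional_extensionality => s; rewrite big_cons Pi.
rewrite -op_linearD; congr f.
by apply: functional_extensionality => s; rewrite big_cons Pi.
Qed.

End OpLinear.

Lemma op_linear_zero : op_linear (fun _ => 0).
Proof. by move=> *; rewrite scaler0 addr0. Qed.

Lemma op_linear_add f g : op_linear f -> op_linear g -> op_linear (fun A => f A + g A).
Proof. by move=> linf ling c A B; rewrite linf ling scalerDr addrACA. Qed.

Lemma op_linear_scale k f : op_linear f -> op_linear (fun A => k *: f A).
Proof. by move=> linf c A B; rewrite linf scalerDr !scalerA mulrC. Qed.

Lemma op_linear_bigsum (I : finType) (F : I -> op -> G) :
  (forall i, op_linear (F i)) -> op_linear (fun A => \sum_i F i A).
Proof.
move=> linF c A B; rewrite scaler_sumr -big_split /=.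
by apply: eq_bigr => i _; rewrite linF.
Qed.

Lemma op_linear_comp f (g : op -> op) : op_linear f ->
  (forall c A B, g (fun s => c *: A s + B s) = (fun s => c *: g A s + g B s)) ->
  op_linear (fun A => f (g A)).
Proof. by move=> linf ling c A B; rewrite ling linf. Qed.

Lemma dot_linear p x c (A B : op) :
  dot p (fun s => c *: A s + B s) x = (fun s => c *: dot p A x s + dot p B x s).
Proof.
by apply: functional_extensionality => s; rewrite /dot scalerDr !scalerA mulrC.
Qed.

Lemma opPart_linear s b : op_linear (fun B => opPart s b B).
Proof.
elim: s b => [|x s IH] b /=; first by move=> c A B; rewrite pr_linear.
by apply: op_linear_bigsum => a; apply: (op_linear_comp (IH _)).
Qed.

Lemma xbr_linearl n p q B s : op_linear (fun A => xbr br n p q A B s).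
Proof.
elim: n p q B s => [|n IH] p q B [|x s] /=; try by move=> c A A'; rewrite ?scaler0 ?addr0.
apply/op_linear_scale/op_linear_bigsum => a; apply: op_linear_add.
  by case: q => [|q]; [exact: op_linear_zero | exact: IH].
apply: op_linear_bigsum => b; case: p => [|p]; first exact: op_linear_zero.
by apply/op_linear_scale/(op_linear_comp (IH _ _ _ _)) => c A A'; apply: dot_linear.
Qed.

Lemma xbr_linearr n p q A s : op_linear (fun B => xbr br n p q A B s).
Proof.
elim: n p q A s => [|n IH] p q A [|x s] /=; try by move=> c B B'; rewrite ?scaler0 ?addr0.
apply/op_linear_scale/op_linear_bigsum => a; apply: op_linear_add.
  case: q => [|q]; first exact: op_linear_zero.
  by apply: (op_linear_comp (IH _ _ _ _)) => c B B'; apply: dot_linear.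
apply: op_linear_bigsum => b; case: p => [|p]; first exact: op_linear_zero.
apply/op_linear_scale/(op_linear_comp (IH _ _ _ _)) => c B B'.
by apply: functional_extensionality => t; rewrite opPart_linear.
Qed.

Lemma eq_opPart s b (B B' : op) : op_eq (size s) B B' -> opPart s b B = opPart s b B'.
Proof.
elim: s b B B' => [|x s IH] b B B' eqB /=; first by rewrite eqB.
by apply: eq_bigr => a _; apply: IH => t size_t; rewrite /opapp eqB //= size_t.
Qed.

Lemma eq_xbr n p q (A A' B B' : op) s : n = (p + q)%N -> size s = n ->
  op_eq p A A' -> op_eq q B B' -> xbr br n p q A B s = xbr br n p q A' B' s.
Proof.
elim: n p q A A' B B' s => [|n IH] p q A A' B B' s n_pq size_s eqA eqB.
  by case: p q n_pq eqA eqB => [|p] [|q] //= _ eqA eqB; rewrite eqA // eqB.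
case: s size_s => [|x s] //= [size_s].
congr (_ *: _); apply: eq_bigr => a _; congr (_ + _).
  case: q n_pq eqB => [|q] // n_pq eqB; apply: IH => //.
    by move: n_pq; rewrite addnS => -[].
  by move=> t size_t; rewrite /dot eqB //= size_t.
apply: eq_bigr => b _; case: p n_pq eqA => [|p] // n_pq eqA.
congr (_ *: _); apply: IH => //; first by move: n_pq; rewrite addSn => -[].
  by move=> t size_t; rewrite /dot eqA //= size_t.
by move=> t size_t; apply: eq_opPart => u size_u; apply: eqB; rewrite size_u size_t.
Qed.

Hypothesis char_K : [pchar K] =i pred0.

Lemma natrS_neq0 n : (n.+1%:R : K) != 0.
Proof. by move/pcharf0P: char_K => ->. Qed.

Lemma br0l y : br 0 y = 0.
Proof.
apply: (addrI (br 0 y)); rewrite addr0 -{1}(scale1r (br 0 y)) -br_linearl.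
by rewrite scale1r addr0.
Qed.

Lemma brZl c x y : br (c *: x) y = c *: br x y.
Proof. by rewrite -[c *: x]addr0 br_linearl br0l addr0. Qed.

Lemma xbr_cons n p q (A B : op) x s :
  xbr br n.+1 p q A B (x :: s) =
  n.+1%:R^-1 *: \sum_(a : bool)
    ((if q is q'.+1 then xbr br n p q' A (dot q B (pr a x)) s else 0)
     + \sum_(b : bool)
         (if p is p'.+1 then
            (-1) ^+ (a && b) *: xbr br n p' q (dot p A (pr a x)) (fun t => opPart t b B) s
          else 0)).
Proof. by []. Qed.

Definition bracket_elt p (A : op) (y : G) : op := xbr br p p 0 A (fun _ => y).

Definition bracket_id p (A : op) : op := xbr br p.+1 p 1 A idop.

Lemma eq_bracket_elt p (A A' : op) y s :
  op_eq p A A' -> size s = p -> bracket_elt p A y s = bracket_elt p A' y s.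
Proof. by move=> eqA size_s; apply: eq_xbr; rewrite ?addn0. Qed.

Lemma eq_bracket_id p (A A' : op) s :
  op_eq p A A' -> size s = p.+1 -> bracket_id p A s = bracket_id p A' s.
Proof. by move=> eqA size_s; apply: eq_xbr; rewrite ?addn1. Qed.

Lemma bracket_elt_linearr p (A : op) c y y' s :
  bracket_elt p A (c *: y + y') s = c *: bracket_elt p A y s + bracket_elt p A y' s.
Proof. exact: (xbr_linearr p p 0 A s c (fun _ => y) (fun _ => y')). Qed.

Lemma bracket_elt0r p (A : op) s : bracket_elt p A 0 s = 0.
Proof. exact: (op_linear0 (xbr_linearr p p 0 A s)). Qed.

Lemma bracket_elt0l p (A : op) y s :
  multilinear p.+1 A -> size s = p -> bracket_elt p (opapp A 0) y s = 0.
Proof.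
move=> linA size_s; rewrite (@eq_bracket_elt p _ (fun _ => 0)) //.
  exact: (op_linear0 (xbr_linearl p p 0 (fun _ => y) s)).
by move=> t size_t; apply: (@multilinear0 _ _ _ p.+1 A [::] t); rewrite //= size_t.
Qed.

Lemma bracket_elt_cons p (A : op) y x s : size s = p ->
  bracket_elt p.+1 A y (x :: s) =
  \sum_(a : bool) \sum_(b : bool)
     (-1) ^+ (a && b) *: bracket_elt p (opapp A (pr a x)) (pr b y) s.
Proof.
move=> size_s; rewrite /bracket_elt /= scaler_sumr; apply: eq_bigr => a _.
rewrite add0r scaler_sumr; apply: eq_bigr => b _.
rewrite (@eq_xbr p p 0 _ (dot p.+1 A (pr a x)) _ (fun _ => pr b y)) ?addn0 //;
  last by case.
rewrite (op_linearZ (xbr_linearl p p 0 _ s) _ (opapp A (pr a x))).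
by rewrite !scalerA mulrAC mulVf ?natrS_neq0 // mul1r.
Qed.

Lemma bracket_elt_homog p (A : op) es s y e :
  multilinear p A -> size s = p -> homogs es s -> homog e y ->
  bracket_elt p A y s = (-1) ^+ (e && parity es) *: br (A s) y.
Proof.
elim: p A es s => [|p IH] A es s linA size_s hom_s hom_y.
  by case: s size_s hom_s => // _; case: es => // _; rewrite andbF expr0 scale1r.
case: s size_s hom_s => [|x s] // [size_s]; case: es => [|ex es] // [hom_x hom_s].
have linAx := multilinear_opapp x linA.
have only_ex_e a b :
    (-1) ^+ (a && b) *: bracket_elt p (opapp A (pr a x)) (pr b y) s =
    if (a == ex) && (b == e) then (-1) ^+ (ex && e) *: bracket_elt p (opapp A x) y s
    else 0.
  rewrite (pr_homog a hom_x) (pr_homog b hom_y).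
  by case: eqP => [->|_]; case: eqP => [->|_];
    rewrite ?bracket_elt0l ?bracket_elt0r ?scaler0.
transitivity ((-1) ^+ (ex && e) *: bracket_elt p (opapp A x) y s).
  rewrite bracket_elt_cons // !sum_bool !only_ex_e.
  by case: (ex) (e) => [] [] /=; rewrite ?addr0 ?add0r.
rewrite (IH _ es) // scalerA -signr_addb; congr (_ ^+ _ *: _).
by rewrite /=; case: (ex) (e) (parity es) => [] [] [].
Qed.

(* For p = 0 the junk term [bracket_id p.-1] is killed by the factor [p%:R]. *)
Lemma bracket_id_cons p (A : op) x s : multilinear p A -> size s = p ->
  bracket_id p A (x :: s) =
  p.+1%:R^-1 *: (bracket_elt p A x s + p%:R *: bracket_id p.-1 (opapp A x) s).
Proof.
move=> linA size_s; rewrite {1}/bracket_id xbr_cons big_split.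
congr (_ *: (_ + _)).
  have dot_idop z : dot 1 idop z = fun _ => z.
    by apply: functional_extensionality => t; rewrite /dot scale1r.
  rewrite /=; under eq_bigr => a _ do rewrite dot_idop.
  rewrite sum_bool -[in RHS](pr_sum x) -[in RHS](scale1r (pr false x)).
  by rewrite bracket_elt_linearr scale1r.
case: p linA size_s => [|p] linA size_s.
  by rewrite scale0r big1 // => a _; rewrite big1.
have opPart_idop b :
    op_eq 1 (fun t => opPart t b idop) (if b then fun _ => 0 else idop).
  by case=> [|z []] // _; case: b; case: z => z0 z1; rewrite /= big_bool /=;
    congr pair; rewrite /= ?addr0 ?add0r.
have tail a : \sum_(b : bool) (-1) ^+ (a && b) *:
    xbr br p.+1 p 1 (dot p.+1 A (pr a x)) (fun t => opPart t b idop) s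
    = p.+1%:R *: bracket_id p (opapp A (pr a x)) s.
  rewrite sum_bool.
  rewrite !(eq_xbr (esym (addn1 p)) size_s (fun t _ => erefl) (opPart_idop _)).
  rewrite (op_linear0 (xbr_linearr _ _ _ _ _)) scaler0 addr0 andbF expr0 scale1r.
  by rewrite (op_linearZ (xbr_linearl _ _ _ _ _) _ (opapp A (pr a x))).
under eq_bigr => a _ do rewrite tail.
rewrite -scaler_sumr sum_bool -(op_linearD (xbr_linearl _ _ _ _ _)).
congr (_ *: _); apply: eq_xbr; rewrite ?addn1 // => t size_t.
by rewrite -(multilinear_pr_split x linA) //= size_t.
Qed.

Lemma bracket_elt_linearl p y s : op_linear (fun A => bracket_elt p A y s).
Proof. exact: xbr_linearl. Qed.

Lemma bracket_id_linear p s : op_linear (fun A => bracket_id p A s).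
Proof. exact: xbr_linearl. Qed.

Lemma multilinear_bracket_elt p (A : op) y :
  multilinear p A -> multilinear p (bracket_elt p A y).
Proof.
elim: p A y => [|p IH] A y linA l r size_lr c x x'; first by [].
have signed_sum_linear (F F1 F2 : bool -> bool -> G) :
    (forall a b, F a b = c *: F1 a b + F2 a b) ->
    \sum_(a : bool) \sum_(b : bool) (-1) ^+ (a && b) *: F a b =
    c *: (\sum_(a : bool) \sum_(b : bool) (-1) ^+ (a && b) *: F1 a b) +
    \sum_(a : bool) \sum_(b : bool) (-1) ^+ (a && b) *: F2 a b.
  move=> eqF; rewrite scaler_sumr -big_split; apply: eq_bigr => a _.
  rewrite scaler_sumr -big_split; apply: eq_bigr => b _.
  by rewrite eqF scalerDr !scalerA mulrC.
case: l size_lr => [|z l] [size_lr].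
  rewrite !cat0s !bracket_elt_cons //; apply: signed_sum_linear => a b.
  rewrite pr_linear -bracket_elt_linearl.
  by apply: eq_bracket_elt => //; apply: opapp_linear.
have size_w w : size (l ++ w :: r) = p by rewrite size_cat addnS -size_lr.
rewrite !cat_cons !bracket_elt_cons //; apply: signed_sum_linear => a b.
by apply: IH; first exact: multilinear_opapp.
Qed.

Lemma multilinear_bracket_id p (A : op) :
  multilinear p A -> multilinear p.+1 (bracket_id p A).
Proof.
elim: p A => [|p IH] A linA l r size_lr c x x'.
  case: l size_lr => [|z l] [size_lr]; last by case: l size_lr.
  rewrite !cat0s !bracket_id_cons // !scale0r !addr0 bracket_elt_linearr.
  by rewrite scalerDr !scalerA mulrC.
have regroup k m (U V U' V' : G) :
    k *: ((c *: U + V) + m *: (c *: U' + V')) =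
    c *: (k *: (U + m *: U')) + k *: (V + m *: V').
  by rewrite !scalerDr !scalerA addrACA; congr (_ *: _ + _ *: _ + _); ring.
case: l size_lr => [|z l] [size_lr].
  rewrite !cat0s !bracket_id_cons // bracket_elt_linearr.
  by rewrite (eq_bracket_id (opapp_linear c x x' linA)) // bracket_id_linear regroup.
have size_w w : size (l ++ w :: r) = p.+1 by rewrite size_cat addnS -size_lr.
rewrite !cat_cons !bracket_id_cons // multilinear_bracket_elt ?size_lr //.
by rewrite IH ?regroup ?size_lr //; exact: multilinear_opapp.
Qed.

Lemma bracket_id_swap_head p (A : op) x y r a b er :
  Defs.symmetric p.+1 A -> size r = p -> homogs er r -> homog a x -> homog b y ->
  bracket_id p.+1 A (x :: y :: r) = (-1) ^+ (a && b) *: bracket_id p.+1 A (y :: x :: r).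
Proof.
move=> [linA symA] size_r hom_r hom_x hom_y.
have swap_tail : p%:R *: bracket_id p.-1 (opapp (opapp A x) y) r =
    (-1) ^+ (a && b) *: (p%:R *: bracket_id p.-1 (opapp (opapp A y) x) r).
  case: p => [|p] in linA symA size_r *; first by rewrite !scale0r scaler0.
  rewrite (@eq_bracket_id _ _ (fun t => (-1) ^+ (a && b) *: opapp (opapp A y) x t)) //.
    by rewrite (op_linearZ (bracket_id_linear _ _)) !scalerA mulrC.
  apply: multilinear_homogs_eq => [||t es size_t hom_t].
  - by do 2 apply: multilinear_opapp.
  - by apply: multilinearZ; do 2 apply: multilinear_opapp.
  apply: (symA [::] t) => //; first by rewrite /= size_t.
  exact: homogs_mem hom_t.
have size_xr : size (x :: r) = p.+1 by rewrite /= size_r.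
have size_yr : size (y :: r) = p.+1 by rewrite /= size_r.
rewrite !bracket_id_cons //; try exact: multilinear_opapp.
rewrite [p.+1.-1]/= [p.+1.-2]/= swap_tail.
have [linAx linAy] := (multilinear_opapp x linA, multilinear_opapp y linA).
have hom_yr : homogs (b :: er) (y :: r) by [].
have hom_xr : homogs (a :: er) (x :: r) by [].
rewrite (bracket_elt_homog linA size_yr hom_yr hom_x).
rewrite (bracket_elt_homog linA size_xr hom_xr hom_y).
rewrite (bracket_elt_homog linAx size_r hom_r hom_y).
rewrite (bracket_elt_homog linAy size_r hom_r hom_x).
rewrite !scalerA mulfV ?natrS_neq0 // !scale1r !scalerDr !scalerA [LHS]addrCA.
by congr (_ *: _ + (_ *: _ + _ *: _)); rewrite /=;
  case: (a) (b) (parity er) => [] [] [] /=; rewrite ?expr0 ?expr1; ring.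
Qed.

Lemma symmetric_bracket_id p (A : op) :
  Defs.symmetric p A -> Defs.symmetric p.+1 (bracket_id p A).
Proof.
elim: p A => [|p IH] A [linA symA]; split; try exact: multilinear_bracket_id.
  by move=> l r x y a b /eqP.
move=> l r x y a b size_lr hom_lr hom_x hom_y.
have [er hom_r] : exists er, homogs er r.
  by apply: homogs_exists => w w_r; apply: hom_lr; rewrite mem_cat w_r orbT.
case: l size_lr hom_lr => [|z l] [size_lr] hom_lr.
  exact: (bracket_id_swap_head (conj linA symA) size_lr hom_r hom_x hom_y).
have [[|ez el] //= [hom_z hom_l]] : exists es, homogs es (z :: l).
  by apply: homogs_exists => w w_l; apply: hom_lr; rewrite mem_cat w_l.
have hom_lr' w : w \in l ++ r -> exists e, homog e w.
  by move=> w_lr; apply: hom_lr; rewrite cat_cons in_cons w_lr orbT.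
have size_l_r : (size l + size r).+2 = p.+1 by rewrite -size_lr.
have size_w u v : size (l ++ u :: v :: r) = p.+1 by rewrite size_cat !addnS.
have [_ symAz] := IH _ (symmetric_opapp (conj linA symA) hom_z).
have hom_w u v e1 e2 : homog e1 u -> homog e2 v ->
    homogs (el ++ e1 :: e2 :: er) (l ++ u :: v :: r).
  by move=> hom_u hom_v; apply: homogs_cat.
rewrite !bracket_id_cons // (symAz l r x y a b size_l_r hom_lr' hom_x hom_y).
rewrite (bracket_elt_homog linA (size_w x y) (hom_w x y a b hom_x hom_y) hom_z).
rewrite (bracket_elt_homog linA (size_w y x) (hom_w y x b a hom_y hom_x) hom_z).
rewrite (symA l r x y a b) ?size_l_r // brZl parity_swap.
by rewrite !scalerDr !scalerA; congr (_ *: _ + _ *: _); ring.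
Qed.

Lemma inS_bracket1 (F : nat -> op) : inS F -> inS (bracket1 br F).
Proof.
case=> N [ord [B [symB defF]]].
exists N, (fun i => (ord i).+1), (fun i => bracket_id (ord i) (B i)); split.
  by move=> i; exact: symmetric_bracket_id.
case=> [|m] l size_l; first by rewrite /bracket1 big_pred0.
rewrite /bracket1 /bracket addn1 -/(bracket_id m (F m) l).
rewrite (eq_bracket_id (A' := fun t => \sum_(i < N | ord i == m) B i t)) //;
  last by move=> t size_t; apply: defF.
rewrite (op_linear_sum (bracket_id_linear _ _)).
by apply: eq_big => // i /eqP ->.
Qed.

End Bracket.

Theorem proposition4p4 (K : fieldType) (G0 G1 : lmodType K)
    (br : (G0 * G1)%type -> (G0 * G1)%type -> (G0 * G1)%type) :
  [pchar K] =i pred0 ->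
  lie_superalgebra br ->
  forall A : nat -> op G0 G1, inS A ->
  forall k : nat, (1 <= k)%N -> inS (bracketk br k A).
Proof.
move=> char_K [br_linearl br_linearr _ _ _] A inS_A k _.
elim: k => [|k IH] //=.
exact: inS_bracket1.
Qed.
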